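(* Let $G$ be a connected graph of order $n\geq 3$ with maximum degree $\Delta(G)$. Then $px_k(G)\leq \Delta(G)$ for each integer $k$ with $3\leq k\leq n$.
   Context: All graphs are finite, simple, undirected and connected. An edge-coloring of a graph assigns a color to each edge (adjacent edges may receive the same color). A tree in an edge-colored graph is proper if any two adjacent edges of the tree receive different colors. For $S\subseteq V(G)$, an $S$-tree is a subgraph of $G$ that is a tree containing all vertices of $S$. For a connected graph $G$ of order $n$ and an integer $k$ with $2\le k\le n$, an edge-coloring of $G$ is a $k$-proper coloring if for every set $S$ of $k$ vertices of $G$ there exists a proper $S$-tree in $G$. The $k$-proper index $px_k(G)$ is the minimum number of colors used in a $k$-proper coloring of $G$. *)

From mathcomp Require Import all_boot.
Set Implicit Arguments. Unset Strict Implicit. Unset Printing Implicit Defensive.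

(* A simple graph G on a finite vertex type T is given by an
   adjacency relation e : rel T which is symmetric and irreflexive.  An edge
   is represented as the 2-element vertex set [set x; y]. *)

Definition simple_graph (T : finType) (e : rel T) : Prop :=
  symmetric e /\ irreflexive e.

Definition connected_graph (T : finType) (e : rel T) : Prop :=
  forall x y : T, connect e x y.

Definition is_edge (T : finType) (e : rel T) (A : {set T}) : bool :=
  [exists x, exists y, e x y && (A == [set x; y])].

Definition degree (T : finType) (e : rel T) (v : T) : nat := #|[set u | e v u]|.
Definition max_degree (T : finType) (e : rel T) : nat := \max_(v : T) degree e v.

Definition subgraph (T : finType) (e : rel T) (V : {set T}) (F : {set {set T}}) : Prop :=
  forall A, A \in F -> is_edge e A && (A \subset V).

Definition sub_rel (T : finType) (F : {set {set T}}) : rel T :=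
  fun x y => (x != y) && ([set x; y] \in F).

Definition is_tree (T : finType) (V : {set T}) (F : {set {set T}}) : Prop :=
  V != set0 /\
  (forall x y, x \in V -> y \in V -> connect (sub_rel F) x y) /\
  #|F| = #|V| - 1.

Definition S_tree (T : finType) (e : rel T) (S V : {set T}) (F : {set {set T}}) : Prop :=
  subgraph e V F /\ is_tree V F /\ S \subset V.

(* an edge-coloring is a map from edges to colors (only its values on edges of G
   matter); a subgraph is proper if adjacent (distinct, sharing an endpoint)
   edges get different colors *)
Definition proper_sub (T : finType) (c : {set T} -> nat) (F : {set {set T}}) : Prop :=
  forall A B, A \in F -> B \in F -> A != B -> A :&: B != set0 -> c A != c B.

Definition k_proper_coloring (T : finType) (e : rel T) (k : nat) (c : {set T} -> nat) : Prop :=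
  forall S : {set T}, #|S| = k ->
    exists V F, S_tree e S V F /\ proper_sub c F.

(* px_k(G) <= m  :<->  there is a k-proper coloring of G using at most m colors,
   i.e. (after relabelling) with all edge colors in {0, ..., m-1}. *)
Definition px_le (T : finType) (e : rel T) (k m : nat) : Prop :=
  exists c : {set T} -> nat,
    (forall A, is_edge e A -> c A < m) /\ k_proper_coloring e k c.

From Pilot Require Import Defs.
From mathcomp Require Import all_boot zify.
Set Implicit Arguments. Unset Strict Implicit. Unset Printing Implicit Defensive.

(* all_boot's lemma [proper_sub] shadows [Defs.proper_sub]. *)

(** A spanning tree of G that is properly coloured with Delta(G) colours is an
    S-tree for every S.  Such a tree is grown greedily from a single vertex:
    as G is connected, some edge xy leaves the current tree V; as xy is not a
    tree edge, fewer than deg(x) <= Delta tree edges meet x, so some colour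
    below Delta is free at x, and the new leaf y meets no tree edge at all. *)

Lemma exists_color_notin_image (aT : finType) (c : aT -> nat) (X : {set aT})
    (m : nat) :
  #|X| < m -> exists2 col, col < m & col \notin [seq c a | a in X].
Proof.
move=> ltXm.
have : ~~ all (mem [seq c a | a in X]) (iota 0 m).
  apply/negP => /allP sub_iota.
  have := uniq_leq_size (iota_uniq 0 m) sub_iota.
  by rewrite size_iota size_image leqNgt ltXm.
by case/allPn => col; rewrite mem_iota add0n => /andP[_ ltcm] ?; exists col.
Qed.

Section AddLeaf.

Variables (T : finType) (V : {set T}) (F : {set {set T}}) (x y : T).
Hypotheses (FV : {in F, forall A : {set T}, A \subset V}).
Hypotheses (xV : x \in V) (yNV : y \notin V).

Lemma leaf_notin_edges : {in F, forall A : {set T}, y \notin A}.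
Proof. by move=> A /FV /subsetP sub; apply: contra yNV; apply: sub. Qed.

Lemma leaf_edge_notin : [set x; y] \notin F.
Proof. by apply/negP => /leaf_notin_edges; rewrite !inE eqxx orbT. Qed.

Lemma is_tree_add_leaf : is_tree V F -> is_tree (y |: V) ([set x; y] |: F).
Proof.
move=> [_ [connF cardF]].
have xNy : x != y by apply: contraNneq yNV => <-.
have lift u v :
    connect (sub_rel F) u v -> connect (sub_rel ([set x; y] |: F)) u v.
  apply: connect_sub => a b /andP[ab abF]; apply: connect1.
  by rewrite /sub_rel /= ab in_setU1 abF orbT.
have cxy : connect (sub_rel ([set x; y] |: F)) x y.
  by apply: connect1; rewrite /sub_rel /= xNy setU11.
have cyx : connect (sub_rel ([set x; y] |: F)) y x.
  by apply: connect1; rewrite /sub_rel /= eq_sym xNy [[set y; x]]setUC setU11.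
split; first by apply/set0Pn; exists y; rewrite setU11.
split.
  move=> u v; rewrite !in_setU1 => /predU1P[-> | uV] /predU1P[-> | vV].
  - exact: connect0.
  - exact: connect_trans cyx (lift _ _ (connF _ _ xV vV)).
  - exact: connect_trans (lift _ _ (connF _ _ uV xV)) cxy.
  - exact: lift _ _ (connF _ _ uV vV).
rewrite !cardsU1 leaf_edge_notin yNV cardF /=.
have : 0 < #|V| by apply/card_gt0P; exists x.
lia.
Qed.

Lemma proper_sub_add_leaf (c : {set T} -> nat) (col : nat) :
  Defs.proper_sub c F -> {in F, forall A : {set T}, x \in A -> c A != col} ->
  Defs.proper_sub (fun A => if A == [set x; y] then col else c A)
                  ([set x; y] |: F).
Proof.
move=> properF freeF.
have neqN A : A \in F -> (A == [set x; y]) = false.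
  by move=> AF; apply: contraNF leaf_edge_notin => /eqP <-.
have meets_at_x A : A \in F -> A :&: [set x; y] != set0 -> x \in A.
  move=> AF /set0Pn[z]; rewrite !inE => /andP[zA /orP[] /eqP zE]; subst z => //.
  by rewrite (negbTE (leaf_notin_edges AF)) in zA.
move=> A B; rewrite !in_setU1 => /predU1P[-> | AF] /predU1P[-> | BF].
- by rewrite eqxx.
- move=> _; rewrite setIC => /(meets_at_x _ BF) /(freeF _ BF).
  by rewrite eqxx neqN // eq_sym.
- move=> _ /(meets_at_x _ AF) /(freeF _ AF).
  by rewrite eqxx neqN.
- by rewrite !neqN //; apply: properF.
Qed.

End AddLeaf.

Section Graph.

Variables (T : finType) (e : rel T).
Hypothesis esym : symmetric e.

Lemma edge_max_degree_gt0 A : is_edge e A -> 0 < max_degree e.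
Proof.
case/existsP=> u /existsP[v /andP[euv _]].
apply: leq_trans (leq_bigmax (F := degree e) u).
by apply/card_gt0P; exists v; rewrite inE.
Qed.

Lemma connected_boundary_edge V :
  connected_graph e -> V != set0 -> V != setT ->
  exists x y, [/\ x \in V, y \notin V & e x y].
Proof.
move=> conn /set0Pn[x0 x0V]; rewrite -properT => /properP[_ [z _ zNV]].
have [/existsP[x /existsP[y /and3P[xV yNV exy]]] | noedge] :=
  boolP [exists x, exists y, [&& x \in V, y \notin V & e x y]].
  by exists x, y.
have stay a b : e a b -> a \in V -> b \in V.
  move=> eab aV; apply: contraNT noedge => bNV.
  by apply/existsP; exists a; apply/existsP; exists b; rewrite aV bNV eab.
have closedV : closed e (mem V).
  by move=> a b eab; apply/idP/idP; [exact: stay | apply: stay; rewrite esym].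
by move: (closed_connect closedV (conn x0 z)); rewrite /= x0V (negbTE zNV).
Qed.

Lemma card_edges_at_lt_degree V F x y :
  subgraph e V F -> e x y -> [set x; y] \notin F ->
  #|[set A in F | x \in A]| < degree e x.
Proof.
move=> subF exy xyNF.
set U := [set u | e x u & [set x; u] \in F].
have edges_at_x : [set A in F | x \in A] \subset [set [set x; u] | u in U].
  apply/subsetP => A; rewrite inE => /andP[AF xA].
  case/andP: (subF A AF) => /existsP[a /existsP[b /andP[eab /eqP AE]]] _.
  move: xA AF eab; rewrite AE !inE => /orP[] /eqP <- AF exb.
    by apply/imsetP; exists b; rewrite // inE exb AF.
  apply/imsetP; exists a; last exact: setUC.
  by rewrite inE esym exb setUC AF.
apply: leq_ltn_trans (subset_leq_card edges_at_x) _.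
apply: leq_ltn_trans (leq_imset_card _ _) _.
apply: proper_card; apply/properP; split.
  by apply/subsetP => u; rewrite !inE => /andP[].
by exists y; rewrite !inE ?exy // (negbTE xyNF) andbF.
Qed.

Definition proper_colored_subtree (m : nat) (V : {set T}) (F : {set {set T}})
    (c : {set T} -> nat) : Prop :=
  [/\ subgraph e V F, is_tree V F, {in F, forall A : {set T}, c A < m}
    & Defs.proper_sub c F].

Lemma proper_colored_subtree1 m r :
  proper_colored_subtree m [set r] set0 (fun=> 0).
Proof.
split; rewrite /subgraph /Defs.proper_sub /is_tree ?cards0 ?cards1;
  try by move=> ?; rewrite inE.
split; first by apply/set0Pn; exists r; rewrite inE.
by split=> // u v; rewrite !inE => /eqP-> /eqP->.
Qed.

Lemma proper_colored_subtree_grow V F c :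
  connected_graph e -> proper_colored_subtree (max_degree e) V F c ->
  V != setT ->
  exists V' F' c',
    proper_colored_subtree (max_degree e) V' F' c' /\ #|V'| = #|V|.+1.
Proof.
move=> conn [subF treeF ltcF properF] VT.
have [x [y [xV yNV exy]]] := connected_boundary_edge conn (proj1 treeF) VT.
have FV : {in F, forall A : {set T}, A \subset V} by move=> A /subF /andP[].
have ltXD : #|[set A in F | x \in A]| < max_degree e.
  apply: leq_trans (leq_bigmax (F := degree e) x).
  exact: card_edges_at_lt_degree subF exy (leaf_edge_notin x FV yNV).
have [col ltcolD colNX] := exists_color_notin_image c ltXD.
exists (y |: V), ([set x; y] |: F).
exists (fun A => if A == [set x; y] then col else c A).
split; last by rewrite cardsU1 yNV.
split.
- move=> A; rewrite in_setU1 => /predU1P[-> | AF].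
    apply/andP; split.
      by apply/existsP; exists x; apply/existsP; exists y; rewrite exy eqxx.
    by rewrite subUset !sub1set !inE xV eqxx orbT.
  by case/andP: (subF A AF) => -> /subset_trans; apply; apply: subsetU1.
- exact: is_tree_add_leaf.
- move=> A; rewrite in_setU1 => /predU1P[-> | /ltcF]; first by rewrite eqxx.
  by case: eqP.
- apply: (proper_sub_add_leaf (V := V)) => // A AF xA.
  by apply: contraNneq colNX => <-; apply: image_f; rewrite inE AF.
Qed.

Lemma exists_proper_colored_spanning_tree (r : T) :
  connected_graph e ->
  exists F c, proper_colored_subtree (max_degree e) [set: T] F c.
Proof.
move=> conn.
have grown n : n < #|T| ->
    exists V F c, proper_colored_subtree (max_degree e) V F c /\ #|V| = n.+1.
  elim: n => [_ | n IH ltnT].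
    by exists [set r], set0, (fun=> 0); rewrite cards1; split=> //;
      apply: proper_colored_subtree1.
  have [V [F [c [subtree cardV]]]] := IH (ltnW ltnT).
  have VT : V != setT.
    by apply: contraTneq ltnT => VT; rewrite -cardV VT cardsT ltnn.
  have [V' [F' [c' [subtree' cardV']]]] :=
    proper_colored_subtree_grow conn subtree VT.
  by exists V', F', c'; rewrite cardV' cardV.
have [|V [F [c [subtree cardV]]]] := grown #|T|.-1.
  by rewrite ltn_predL; apply/card_gt0P; exists r.
have VT : V = [set: T].
  by apply/eqP; rewrite eqEcard subsetT cardsT cardV leqSpred.
by exists F, c; rewrite -VT.
Qed.

End Graph.

Theorem mainTheorem11 (T : finType) (e : rel T) :
  simple_graph e -> connected_graph e -> 3 <= #|T| ->
  forall k : nat, 3 <= k <= #|T| -> px_le e k (max_degree e).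
Proof.
move=> [esym _] conn nT k _.
have /card_gt0P[r _] : 0 < #|T| by lia.
have [F [c [subF treeF ltcF properF]]] :=
  exists_proper_colored_spanning_tree esym r conn.
exists (fun A => if A \in F then c A else 0); split.
  move=> A edgeA; case: ifP => [/ltcF // | _].
  exact: edge_max_degree_gt0 edgeA.
move=> S _; exists [set: T], F; split; first by split; rewrite ?subsetT.
by move=> A B AF BF; rewrite AF BF; apply: properF.
Qed.
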